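(* Let $k\ge3$ and let $p_1<\dots<p_k$ be odd primes. Then $$C_{p_1\cdots p_k}\le p_1\cdots p_{k-2}\cdot A_{p_1\cdots p_{k-1}}\cdot C_{p_1\cdots p_{k-1}},$$ and consequently $\epsilon_k^{inv}\le\epsilon_2\epsilon_3\cdots\epsilon_{k-1}$.
   Context: $\Phi_n$ is the $n$-th cyclotomic polynomial, $A_n$ the maximum absolute value of its coefficients; $\Psi_n(x)=1/\Phi_n(x)=\sum_{m\ge0}c_n(m)x^m$ as a formal power series and $C_n=\max_m|c_n(m)|$. For odd primes $p_1<\dots<p_k$, $M_k=\prod_{i=1}^{k-2}p_i^{2^{k-i-1}-1}$; $\epsilon_k$ (resp. $\epsilon_k^{inv}$) is the smallest positive real with $A_{p_1\cdots p_k}\le\epsilon_kM_k$ (resp. $C_{p_1\cdots p_k}\le\epsilon_k^{inv}M_k$) for all odd primes $p_1<\dots<p_k$. *)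

From HB Require Import structures.
From mathcomp Require Import all_boot all_order all_algebra all_field.
Set Implicit Arguments. Unset Strict Implicit. Unset Printing Implicit Defensive.
Import Order.TTheory GRing.Theory Num.Theory.
Local Open Scope ring_scope.

Definition Acoef (n : nat) : nat :=
  \max_(i < size 'Phi_n) absz (nth 0%R 'Phi_n i).

(* First m+1 coefficients of the formal power series inverse 1/p
   (p`_0 assumed a unit; for cyclotomic polynomials p`_0 = +-1). *)
Fixpoint inv_series_seq (p : {poly int}) (m : nat) : seq int :=
  match m with
  | 0 => [:: (p`_0)^-1]
  | m'.+1 =>
      let s := inv_series_seq p m' in
      rcons s (- (p`_0)^-1 * \sum_(1 <= i < m'.+2) p`_i * s`_(m'.+1 - i))
  end.

Definition inv_cyc_coef (n m : nat) : int := (inv_series_seq 'Phi_n m)`_m.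

Definition is_Cmax (n C : nat) : Prop :=
  (forall m, (absz (inv_cyc_coef n m) <= C)%N) /\ exists m, absz (inv_cyc_coef n m) = C.

Definition odd_prime_chain (k : nat) (s : seq nat) : bool :=
  [&& size s == k, all prime s, all odd s & sorted ltn s].

(* M_k = prod_{i=1}^{k-2} p_i^(2^(k-i-1) - 1), here with 0-based index j = i-1 *)
Definition Mk (k : nat) (s : seq nat) : nat :=
  (\prod_(j < k.-2) (nth 0 s j) ^ (2 ^ (k - j - 2) - 1))%N.

Definition eps_admissible (R : realFieldType) (k : nat) (e : R) : Prop :=
  forall s, odd_prime_chain k s -> (Acoef (\prod_(p <- s) p))%:R <= e * (Mk k s)%:R.

Definition eps_inv_admissible (R : realFieldType) (k : nat) (e : R) : Prop :=
  forall s C, odd_prime_chain k s -> is_Cmax (\prod_(p <- s) p) C ->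
    C%:R <= e * (Mk k s)%:R.

(* For a prime p not dividing n, Phi_(np)(x) Phi_n(x) = Phi_n(x^p), hence
   Psi_(np)(x) = Phi_n(x) Psi_n(x^p) and c_(np)(m) = sum_i c_n(i) a_n(m - p i).
   Only the i with 0 <= m - p i <= phi(n) contribute; there are at most B of
   them as soon as phi(n) + 1 <= B p, and for n = p_1...p_(k-1), p = p_k one can
   take B = p_1...p_(k-2).  Iterating from
   C_(p_1 p_2) <= 1, and using M_(k+1) = p_1...p_(k-1) M_k^2, gives the bound
   on epsilon_k^inv. *)

From HB Require Import structures.
From mathcomp Require Import all_boot all_order all_algebra all_field.
From mathcomp Require Import zify ring.
Import Order.TTheory GRing.Theory Num.Theory.
Set Implicit Arguments. Unset Strict Implicit. Unset Printing Implicit Defensive.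

Section InverseSeries.
Local Open Scope ring_scope.
Variable P : {poly int}.

Definition inv_series_coef (m : nat) : int := (inv_series_seq P m)`_m.

Lemma size_inv_series_seq m : size (inv_series_seq P m) = m.+1.
Proof. by elim: m => [|m IHm] //=; rewrite size_rcons IHm. Qed.

Lemma nth_inv_series_seq m i :
  (i <= m)%N -> (inv_series_seq P m)`_i = inv_series_coef i.
Proof.
elim: m => [|m IHm]; first by rewrite leqn0 => /eqP ->.
rewrite leq_eqVlt => /predU1P[-> // | lt_im].
by rewrite /= nth_rcons size_inv_series_seq lt_im IHm.
Qed.

Hypothesis P0_unit : P`_0 \is a GRing.unit.

Lemma inv_series_coef_conv m :
  \sum_(i < m.+1) P`_i * inv_series_coef (m - i) = (m == 0)%:R.
Proof.
case: m => [|m]; first by rewrite big_ord1 /inv_series_coef /= mulrV.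
rewrite big_ord_recl /= subn0.
have -> : inv_series_coef m.+1 =
          - (P`_0)^-1 * \sum_(1 <= i < m.+2) P`_i * inv_series_coef (m.+1 - i).
  rewrite /inv_series_coef /= nth_rcons size_inv_series_seq ltnn eqxx.
  congr (_ * _); rewrite !big_nat; apply: eq_bigr => i /andP[i_gt0 _].
  by rewrite nth_inv_series_seq // leq_subLR -add1n leq_add2r.
rewrite mulrA mulrN mulrV // mulN1r big_add1 /= big_mkord.
under [X in _ + X]eq_bigr => i _ do rewrite /bump /= add1n subSS.
by rewrite addNr.
Qed.

Lemma inv_series_coefE (Q : {poly int}) N :
  (forall i, (i < N)%N -> (P * Q)`_i = (i == 0)%:R) ->
  forall i, (i < N)%N -> Q`_i = inv_series_coef i.
Proof.
move=> PQ i; elim/ltn_ind: i => i IHi lt_iN.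
have := PQ i lt_iN; rewrite -(inv_series_coef_conv i) coefM.
rewrite !big_ord_recl /= !subn0.
under eq_bigr => j _.
  have lt_ji : (i - bump 0 j < i)%N.
    by have := ltn_ord j; rewrite /bump leq0n add1n; lia.
  rewrite IHi ?(leq_ltn_trans (leq_subr _ _) lt_iN) //.
  over.
by move/addIr; apply: mulrI.
Qed.

Lemma coefM_inv_series_trunc N i :
  (i < N)%N -> (P * \poly_(j < N) inv_series_coef j)`_i = (i == 0)%:R.
Proof.
move=> lt_iN; rewrite coefM -(inv_series_coef_conv i); apply: eq_bigr => j _.
by rewrite coef_poly (leq_ltn_trans (leq_subr _ _) lt_iN).
Qed.

End InverseSeries.

Section Cyclotomic.
Local Open Scope ring_scope.

Lemma Cyclotomic_coef0_unit n : (0 < n)%N -> 'Phi_n`_0 \is a GRing.unit.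
Proof.
move=> n_gt0; have := prod_Cyclotomic n_gt0.
rewrite (big_rem n) ?divisors_id // => /(congr1 (horner^~ 0)).
rewrite hornerM horner_prod hornerD hornerN hornerXn hornerC expr0n.
rewrite gtn_eqF // sub0r horner_coef0 => PhiE.
by have := @unitrN1 int; rewrite -PhiE unitrM => /andP[].
Qed.

Lemma perm_divisors_mul_prime n p : (0 < n)%N -> prime p -> coprime p n ->
  perm_eq (divisors (n * p)) (divisors n ++ [seq (d * p)%N | d <- divisors n]).
Proof.
move=> n_gt0 p_pr co_pn; have p_gt0 := prime_gt0 p_pr.
apply: uniq_perm; first exact: divisors_uniq.
  rewrite cat_uniq divisors_uniq /=; apply/andP; split.
    apply/hasPn => x /mapP[d d_n ->]; rewrite -dvdn_divisors //.
    apply/negP => /(dvdn_trans (dvdn_mull d (dvdnn p))).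
    by rewrite -(negbK (p %| n)%N) -prime_coprime // co_pn.
  rewrite map_inj_uniq ?divisors_uniq // => a b /eqP.
  by rewrite eqn_pmul2r // => /eqP.
move=> x; rewrite mem_cat -!dvdn_divisors ?muln_gt0 ?n_gt0 ?p_gt0 //.
apply/idP/orP => [|[x_n | /mapP[d d_n ->]]]; last 2 first.
- by rewrite dvdn_mulr.
- by rewrite dvdn_pmul2r // dvdn_divisors.
have [/dvdnP[d ->] | p_x] := boolP (p %| x)%N.
  by rewrite dvdn_pmul2r // => d_n; right; apply/mapP; exists d; rewrite -?dvdn_divisors.
by left; rewrite -(@Gauss_dvdl _ _ p) // coprime_sym prime_coprime.
Qed.

Lemma Cyclotomic_mul_prime n p : (0 < n)%N -> prime p -> coprime p n ->
  'Phi_(n * p) * 'Phi_n = 'Phi_n \Po 'X^p.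
Proof.
move=> + p_pr; have p_gt0 := prime_gt0 p_pr.
elim/ltn_ind: n => n IHn n_gt0 co_pn.
have prodE : \prod_(d <- divisors n) ('Phi_(d * p) * 'Phi_d) =
             \prod_(d <- divisors n) ('Phi_d \Po 'X^p).
  have [compM comp1] := comp_poly_multiplicative ('X^p : {poly int}).
  rewrite -(big_morph _ compM comp1) prod_Cyclotomic //.
  rewrite comp_polyB comp_Xn_poly comp_polyC.
  rewrite -exprM mulnC -prod_Cyclotomic ?muln_gt0 ?n_gt0 ?p_gt0 //.
  rewrite (perm_big _ (perm_divisors_mul_prime n_gt0 p_pr co_pn)) big_cat big_map /=.
  by rewrite big_split /= mulrC.
move: prodE; rewrite (big_rem n) ?divisors_id // [in RHS](big_rem n) ?divisors_id //=.
rewrite (eq_big_seq (fun d => 'Phi_d \Po 'X^p)); last first.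
  move=> d; rewrite mem_rem_uniq ?divisors_uniq // inE => /andP[d_neq_n].
  rewrite -dvdn_divisors // => d_n; have d_gt0 := dvdn_gt0 n_gt0 d_n.
  apply: IHn => //; last exact: coprime_dvdr d_n co_pn.
  by rewrite ltn_neqAle d_neq_n dvdn_leq.
apply: mulIf; rewrite prodf_seq_neq0; apply/allP => d _ /=.
by rewrite comp_poly_eq0 ?size_polyXn ?ltnS ?prime_gt0 // monic_neq0 ?Cyclotomic_monic.
Qed.

Lemma Cyclotomic1 : 'Phi_1 = 'X - 1.
Proof. by have := prod_Cyclotomic (ltn0Sn 0); rewrite big_seq1 expr1. Qed.

Lemma Cyclotomic_prime p : prime p -> 'Phi_p = \poly_(i < p) 1.
Proof.
move=> p_pr; have := Cyclotomic_mul_prime (ltn0Sn 0) p_pr (coprimen1 p).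
rewrite mul1n Cyclotomic1 comp_polyB comp_polyX comp_polyC subrX1 mulrC poly_def.
have XsubN0 : 'X - 1 != 0 :> {poly int} by rewrite -polyC1 polyXsubC_eq0.
by move/(mulfI XsubN0) ->; apply: eq_bigr => i _; rewrite scale1r.
Qed.

End Cyclotomic.

Section LacunaryConvolution.
Local Open Scope ring_scope.

Lemma leq_absz_sum (I : Type) (r : seq I) (P : pred I) (F : I -> int) :
  (absz (\sum_(i <- r | P i) F i)%R <= \sum_(i <- r | P i) absz (F i))%N.
Proof.
rewrite -lez_nat abszE (big_morph Posz PoszD (erefl 0%:Z)).
under eq_bigr do rewrite abszE.
exact: ler_norm_sum.
Qed.

Lemma sum_window_le L a B :
  (\sum_(i < L) ((a <= i) && (i < a + B)) <= B)%N.
Proof.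
suff -> : (\sum_(i < L) ((a <= i) && (i < a + B)) = minn L (a + B) - minn L a)%N.
  by lia.
elim: L => [|L IHL]; first by rewrite big_ord0 !min0n.
by rewrite big_ord_recr /= IHL; case: leqP => ?; case: ltnP => ? /=; lia.
Qed.

Lemma lacunary_conv_bound (P : {poly int}) (w : nat -> int) p L m A Cb B :
  (0 < p)%N -> (size P <= B * p)%N ->
  (forall j, absz (P`_j)%R <= A)%N -> (forall i, absz (w i) <= Cb)%N ->
  (absz (\sum_(i < L) w i * (P * 'X^(p * i))`_m)%R <= B * A * Cb)%N.
Proof.
move=> p_gt0 szP leA leCb.
pose window i := ((p * i <= m) && (m - p * i < size P))%N.
apply: leq_trans (leq_absz_sum _ _ _) _.
apply: (@leq_trans (\sum_(i < L) Cb * (A * window i))%N).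
  apply: leq_sum => i _; rewrite abszM coefMXn leq_mul // /window.
  case: ltnP => //= le_pi_m; case: ltnP => /= [_ | le_sz]; first by rewrite muln1.
  by rewrite nth_default.
rewrite -!big_distrr /= [in leqRHS]mulnC [(B * A)%N]mulnC; do 2!apply: leq_mul => //.
apply: leq_trans (sum_window_le L (m %/ p + 1 - B) B); apply: leq_sum => i _.
rewrite /window; case/boolP: (_ && _) => // /andP[le_pi_m lt_sz].
have le_i : (i <= m %/ p)%N by rewrite leq_divRL // mulnC.
have lt_iB : (m %/ p < i + B)%N by rewrite ltn_divLR // mulnDl; lia.
by rewrite (_ : _ && _ = true) //; apply/andP; split; lia.
Qed.

End LacunaryConvolution.

Section InverseCyclotomic.
Local Open Scope ring_scope.

Lemma coef_le_Acoef n j : (absz ('Phi_n`_j)%R <= Acoef n)%N.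
Proof.
have [lt_j_sz | le_sz_j] := ltnP j (size 'Phi_n); last by rewrite nth_default.
exact: (@leq_bigmax _ (fun i : 'I_(size 'Phi_n) => absz 'Phi_n`_i) (Ordinal lt_j_sz)).
Qed.

Lemma inv_cyc_coef_mul_prime n p m : (0 < n)%N -> prime p -> coprime p n ->
  inv_cyc_coef (n * p) m = \sum_(i < m.+1) inv_cyc_coef n i * ('Phi_n * 'X^(p * i))`_m.
Proof.
move=> n_gt0 p_pr co_pn; have p_gt0 := prime_gt0 p_pr.
(* [T] is [Psi_n] modulo [x^(m+1)], so [Phi_n * T(x^p)] inverts [Phi_(n p)] modulo [x^(m+1)]. *)
pose T := \poly_(i < m.+1) inv_cyc_coef n i.
have PhiT : forall i, (i < m.+1)%N ->
    ('Phi_(n * p) * ('Phi_n * (T \Po 'X^p)))`_i = (i == 0)%:R.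
  move=> i lt_im; rewrite mulrA Cyclotomic_mul_prime // -comp_polyM coef_comp_poly_Xn //.
  have [/dvdnP[j i_eq] | p_ndvd_i] := boolP (p %| i)%N.
    rewrite {}i_eq in lt_im *.
    rewrite mulnK // muln_eq0 (gtn_eqF p_gt0) orbF coefM_inv_series_trunc //.
      exact: Cyclotomic_coef0_unit.
    by apply: leq_ltn_trans lt_im; rewrite leq_pmulr.
  by case: i lt_im p_ndvd_i => // _; rewrite dvdn0.
have np_gt0 : (0 < n * p)%N by rewrite muln_gt0 n_gt0.
rewrite -[LHS]/(inv_series_coef _ m).
rewrite -(inv_series_coefE (Cyclotomic_coef0_unit np_gt0) PhiT (ltnSn m)).
rewrite /T poly_def linear_sum /= mulr_sumr coef_sum; apply: eq_bigr => i _.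
by rewrite comp_polyZ comp_Xn_poly -scalerAr coefZ exprM.
Qed.

Lemma inv_cyc_coef_mul_prime_le n p B Cb :
  (0 < n)%N -> prime p -> coprime p n -> ((totient n).+1 <= B * p)%N ->
  (forall j, absz (inv_cyc_coef n j) <= Cb)%N ->
  forall m, (absz (inv_cyc_coef (n * p) m) <= B * Acoef n * Cb)%N.
Proof.
move=> n_gt0 p_pr co_pn totB leCb m; rewrite inv_cyc_coef_mul_prime //.
apply: lacunary_conv_bound => //; first exact: prime_gt0.
  by rewrite size_Cyclotomic.
exact: coef_le_Acoef.
Qed.

Lemma inv_cyc_coef1 m : inv_cyc_coef 1 m = -1.
Proof.
have PhiQ : forall i, (i < m.+1)%N -> ('Phi_1 * - \poly_(j < m.+1) 1)`_i = (i == 0)%:R.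
  move=> i lt_im; rewrite Cyclotomic1 mulrN mulrBl mul1r opprB coefB coefXM !coef_poly.
  by case: i lt_im => [|i] lt_im; rewrite lt_im ?subr0 // (ltnW lt_im) subrr.
have := inv_series_coefE (Cyclotomic_coef0_unit (ltn0Sn 0)) PhiQ (ltnSn m).
by rewrite coefN coef_poly ltnSn => ->.
Qed.

Lemma Acoef_le1 n : (forall j, (absz ('Phi_n`_j)%R <= 1)%N) -> (Acoef n <= 1)%N.
Proof. by move=> le1; apply/bigmax_leqP => i _. Qed.

Lemma Acoef1_le : (Acoef 1 <= 1)%N.
Proof. by apply: Acoef_le1 => j; rewrite Cyclotomic1 coefB coefX coef1; case: j => [|[|j]]. Qed.

Lemma Acoef_prime_le p : prime p -> (Acoef p <= 1)%N.
Proof.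
by move=> p_pr; apply: Acoef_le1 => j; rewrite Cyclotomic_prime // coef_poly; case: ifP.
Qed.

End InverseCyclotomic.

Definition prefix_prod (s : seq nat) (j : nat) : nat := (\prod_(i < j) nth 0 s i)%N.

Lemma prefix_prodS s j : prefix_prod s j.+1 = (prefix_prod s j * nth 0 s j)%N.
Proof. exact: big_ord_recr. Qed.

Lemma prefix_prodE s j : (j <= size s)%N -> (\prod_(p <- take j s) p)%N = prefix_prod s j.
Proof.
elim: j => [|j IHj] le_js; first by rewrite take0 big_nil /prefix_prod big_ord0.
by rewrite (take_nth 0) // -cats1 big_cat big_seq1 IHj ?(ltnW le_js) // prefix_prodS.
Qed.

Lemma leq_totient n : (totient n <= n)%N.
Proof.
rewrite totient_count_coprime.
apply: (@leq_trans (\sum_(0 <= d < n) 1)%N); first by apply: leq_sum => d _; apply: leq_b1.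
by rewrite sum_nat_const_nat subn0 muln1.
Qed.

Section PrimeChain.
Variable s : seq nat.
Hypothesis s_prime : all prime s.
Hypothesis s_sorted : sorted ltn s.

Lemma prime_nth i : (i < size s)%N -> prime (nth 0 s i).
Proof. by move: i; apply/all_nthP. Qed.

Lemma ltn_nth i j : (i < j)%N -> (j < size s)%N -> (nth 0 s i < nth 0 s j)%N.
Proof.
move=> lt_ij lt_js; apply: (sorted_ltn_nth ltn_trans 0 s_sorted) => //.
by rewrite inE (ltn_trans lt_ij lt_js).
Qed.

Lemma prefix_prod_gt0 j : (j <= size s)%N -> (0 < prefix_prod s j)%N.
Proof.
elim: j => [|j IHj] le_js; first by rewrite /prefix_prod big_ord0.
by rewrite prefix_prodS muln_gt0 IHj ?(ltnW le_js) // prime_gt0 ?prime_nth.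
Qed.

Lemma coprime_nth_prefix_prod j : (j < size s)%N -> coprime (nth 0 s j) (prefix_prod s j).
Proof.
move=> lt_js; suff : forall i, (i <= j)%N -> coprime (nth 0 s j) (prefix_prod s i) by apply.
elim=> [|i IHi] le_ij; first by rewrite /prefix_prod big_ord0 coprimen1.
rewrite prefix_prodS coprimeMr IHi ?(ltnW le_ij) //= prime_coprime ?prime_nth //.
rewrite dvdn_prime2 ?prime_nth ?(ltn_trans le_ij lt_js) //.
by rewrite eq_sym (ltn_eqF (ltn_nth le_ij lt_js)).
Qed.

Lemma totient_prefix_prod_lt j : (j < size s)%N ->
  ((totient (prefix_prod s j)).+1 <= prefix_prod s j.-1 * nth 0 s j)%N.
Proof.
case: j => [|j] lt_js.
  by rewrite /prefix_prod big_ord0 mul1n prime_gt1 ?prime_nth.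
rewrite prefix_prodS /= (leq_ltn_trans (leq_totient _)) // ltn_pmul2l.
  exact: ltn_nth.
exact: prefix_prod_gt0 (ltnW (ltnW lt_js)).
Qed.

Lemma inv_cyc_coef_prefix_prod_le j Cb : (j < size s)%N ->
  (forall m, absz (inv_cyc_coef (prefix_prod s j) m) <= Cb)%N ->
  forall m, (absz (inv_cyc_coef (prefix_prod s j.+1) m)
             <= prefix_prod s j.-1 * Acoef (prefix_prod s j) * Cb)%N.
Proof.
move=> lt_js leCb m; rewrite prefix_prodS.
apply: inv_cyc_coef_mul_prime_le => //.
- exact: prefix_prod_gt0 (ltnW lt_js).
- exact: prime_nth.
- exact: coprime_nth_prefix_prod.
- exact: totient_prefix_prod_lt.
Qed.

Lemma inv_cyc_coef_prefix_prod2_le1 m : (1 < size s)%N ->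
  (absz (inv_cyc_coef (prefix_prod s 2) m) <= 1)%N.
Proof.
move=> size_gt1.
have le1_0 m' : (absz (inv_cyc_coef (prefix_prod s 0) m') <= 1)%N.
  by rewrite /prefix_prod big_ord0 inv_cyc_coef1.
have le1_1 m' : (absz (inv_cyc_coef (prefix_prod s 1) m') <= 1)%N.
  apply: leq_trans (inv_cyc_coef_prefix_prod_le (ltnW size_gt1) le1_0 m') _.
  by rewrite /prefix_prod big_ord0 mul1n muln1 Acoef1_le.
apply: leq_trans (inv_cyc_coef_prefix_prod_le size_gt1 le1_1 m) _.
rewrite /prefix_prod big_ord0 big_ord1 mul1n muln1 Acoef_prime_le //.
exact: prime_nth (ltnW size_gt1).
Qed.

End PrimeChain.

Lemma odd_prime_chain_take k s j :
  odd_prime_chain k s -> (j <= k)%N -> odd_prime_chain j (take j s).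
Proof.
case/and4P=> /eqP <- s_prime s_odd s_sorted le_jk.
have all_take (a : pred nat) : all a s -> all a (take j s).
  by rewrite -{1}(cat_take_drop j s) all_cat => /andP[].
by rewrite /odd_prime_chain size_takel // eqxx take_sorted // !all_take.
Qed.

Lemma Mk_take j s : Mk j (take j s) = Mk j s.
Proof.
apply: eq_bigr => i _; rewrite nth_take //.
exact: leq_trans (ltn_ord i) (leq_trans (leq_pred _) (leq_pred _)).
Qed.

Lemma Mk_recr d s : Mk d.+3 s = (prefix_prod s d.+1 * Mk d.+2 s ^ 2)%N.
Proof.
have -> : Mk d.+2 s = (\prod_(j < d.+1) nth 0 s j ^ (2 ^ (d - j) - 1))%N.
  rewrite big_ord_recr /= subnn expn0 subnn expn0 muln1.
  by apply: eq_bigr => j _; rewrite (_ : d.+2 - j - 2 = d - j)%N //; lia.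
rewrite -mulnn /Mk /prefix_prod -!big_split /=; apply: eq_bigr => j _.
rewrite -{2}(expn1 (nth 0 s j)) -!expnD; congr (_ ^ _).
rewrite (_ : d.+3 - j - 2 = (d - j).+1)%N; last by have := ltn_ord j; lia.
have : (0 < 2 ^ (d - j))%N by rewrite expn_gt0.
by rewrite expnS; lia.
Qed.

Section EpsilonBound.
Local Open Scope ring_scope.
Variables (R : realFieldType) (k : nat) (e : nat -> R) (s : seq nat).
Hypothesis s_chain : odd_prime_chain k s.
Hypothesis e_admissible : forall j, (2 <= j < k)%N -> eps_admissible j (e j).

Lemma inv_cyc_coef_prefix_prod_eps_le j : (2 <= j <= k)%N ->
  exists Cb : nat, (forall m, absz (inv_cyc_coef (prefix_prod s j) m) <= Cb)%N /\
    Cb%:R <= (\prod_(2 <= i < j) e i) * (Mk j s)%:R.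
Proof.
case/and4P: s_chain => /eqP size_s s_prime _ s_sorted.
case/andP=> le2j; rewrite -(subnK le2j) addn2; elim: (j - 2)%N => [|d IHd] le_dk.
  exists 1%N; split; first by move=> m; apply: inv_cyc_coef_prefix_prod2_le1; lia.
  by rewrite big_geq // mul1r /Mk big_ord0.
have [Cb [leCb Cb_le]] := IHd (ltnW le_dk).
exists (prefix_prod s d.+1 * Acoef (prefix_prod s d.+2) * Cb)%N; split.
  by apply: inv_cyc_coef_prefix_prod_le => //; lia.
have d2_range : (2 <= d.+2 < k)%N by lia.
have := e_admissible d2_range (odd_prime_chain_take s_chain (ltnW le_dk)).
rewrite prefix_prodE ?size_takel ?size_s ?(ltnW le_dk) // Mk_take => A_le.
rewrite big_nat_recr //= Mk_recr !natrM.
have -> : forall E M n : R, E * e d.+2 * (n * (M * M)) = n * (e d.+2 * M) * (E * M).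
  by move=> E M n; ring.
apply: ler_pM => //; first by rewrite mulr_ge0.
by apply: ler_wpM2l.
Qed.

End EpsilonBound.

Theorem mainTheorem11 :
  (forall (k : nat) (s : seq nat), (3 <= k)%N -> odd_prime_chain k s ->
     forall C Cprev : nat,
       is_Cmax (\prod_(p <- s) p) C ->
       is_Cmax (\prod_(p <- take k.-1 s) p) Cprev ->
       (C <= (\prod_(p <- take k.-2 s) p) * Acoef (\prod_(p <- take k.-1 s) p) * Cprev)%N)
  /\
  (forall (R : realFieldType) (k : nat) (e : nat -> R), (3 <= k)%N ->
     (forall j, (2 <= j < k)%N -> eps_admissible j (e j)) ->
     eps_inv_admissible k (\prod_(2 <= j < k) e j)%R).
Proof.
split.
  move=> k s le3k s_chain C Cprev [_ [m <-]] [leCprev _].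
  case/and4P: (s_chain) => /eqP size_s s_prime _ s_sorted.
  rewrite -[in X in inv_cyc_coef X](take_size s) !prefix_prodE ?size_s //; try lia.
  rewrite prefix_prodE ?size_s in leCprev; last by lia.
  have k_eq : k = k.-1.+1 by lia.
  rewrite [X in inv_cyc_coef (prefix_prod s X)]k_eq.
  apply: inv_cyc_coef_prefix_prod_le => //; lia.
move=> R k e le3k e_admissible s C s_chain [_ [m <-]].
have [|Cb [leCb Cb_le]] := inv_cyc_coef_prefix_prod_eps_le s_chain e_admissible (j := k).
  lia.
case/and4P: (s_chain) => /eqP size_s _ _ _.
rewrite -[in X in inv_cyc_coef X](take_size s) prefix_prodE ?size_s //.
by apply: le_trans Cb_le; rewrite ler_nat leCb.
Qed.
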